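(* Let $n,k$ be positive integers, $m=kn+1$, and let $\Delta$ be a $\Gamma_{m,n}$-semimodule. If $a$ is an $m$-generator of $\Delta$, then for every integer $l>0$ the integer interval $[a-l(kn+1),\,a-lkn-1]$ has empty intersection with $\Delta$.
   Context: $\Gamma_{m,n}=\{am+bn:a,b\in\mathbb{Z}_{\ge0}\}$ for coprime positive $m,n$. A $\Gamma_{m,n}$-semimodule is a subset $\Delta\subset\mathbb{Z}_{\ge0}$ with $\Delta+\Gamma_{m,n}\subset\Delta$. An $m$-generator of $\Delta$ is an element $a\in\Delta$ with $a-m\notin\Delta$. *)

From Stdlib Require Import ZArith.
Open Scope Z_scope.

Definition in_Gamma (m n : Z) (x : Z) : Prop :=
  exists a b : Z, 0 <= a /\ 0 <= b /\ x = a * m + b * n.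

Definition is_semimodule (m n : Z) (Delta : Z -> Prop) : Prop :=
  (forall x, Delta x -> 0 <= x) /\
  (forall x g, Delta x -> in_Gamma m n g -> Delta (x + g)).

Definition is_m_generator (m : Z) (Delta : Z -> Prop) (a : Z) : Prop :=
  Delta a /\ ~ Delta (a - m).

(* Write x = a - l m + j with m = k n + 1, so 0 <= j <= l - 1 on the interval.
   Then a - m = x + (l - 1 - j) m + (j k) n, so a - m would lie in Delta + Gamma
   if x were in Delta, contradicting that a is an m-generator. *)

From Stdlib Require Import ZArith Lia.
Open Scope Z_scope.

Lemma in_Gamma_comb (m n p q : Z) :
  0 <= p -> 0 <= q -> in_Gamma m n (p * m + q * n).
Proof. intros Hp Hq; exists p, q; auto. Qed.

Lemma semimodule_sub_Gamma_notin (m n : Z) (Delta : Z -> Prop) (y g : Z) :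
  is_semimodule m n Delta -> ~ Delta y -> in_Gamma m n g -> ~ Delta (y - g).
Proof.
  intros [_ Hclosed] Hy Hg Hyg; apply Hy.
  replace y with (y - g + g) by ring.
  exact (Hclosed _ _ Hyg Hg).
Qed.

Lemma gap_to_pred_in_Gamma (n k a l x : Z) :
  0 <= k -> 0 < l ->
  a - l * (k * n + 1) <= x <= a - l * k * n - 1 ->
  in_Gamma (k * n + 1) n (a - (k * n + 1) - x).
Proof.
  intros Hk Hl Hx.
  set (j := x - (a - l * (k * n + 1))).
  replace (a - (k * n + 1) - x) with ((l - 1 - j) * (k * n + 1) + (j * k) * n)
    by (unfold j; ring).
  apply in_Gamma_comb; unfold j in *; nia.
Qed.

Theorem mainTheorem14 (n k : Z) (Delta : Z -> Prop) (a : Z) :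
  0 < n -> 0 < k ->
  is_semimodule (k * n + 1) n Delta ->
  is_m_generator (k * n + 1) Delta a ->
  forall l x : Z, 0 < l ->
    a - l * (k * n + 1) <= x <= a - l * k * n - 1 ->
    ~ Delta x.
Proof.
  intros _ Hk Hsemi [_ Hpred] l x Hl Hx.
  pose proof (gap_to_pred_in_Gamma n k a l x ltac:(lia) Hl Hx) as Hgap.
  replace x with (a - (k * n + 1) - (a - (k * n + 1) - x)) by ring.
  exact (semimodule_sub_Gamma_notin _ _ _ _ _ Hsemi Hpred Hgap).
Qed.
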